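(* Let $G$ be a connected graph with no isolated vertices and with $\gamma(G)>1$. Then $$\gamma_t(G) \le \gamma(G) + \tfrac{1}{2}\gamma_c(G).$$ Moreover, this bound is tight: there exists such a graph attaining equality.
   Context: All graphs are finite, simple and undirected. A set $S\subseteq V(G)$ is a dominating set if every vertex not in $S$ is adjacent to some vertex of $S$; $\gamma(G)$ is the minimum size of a dominating set. A set $S$ is a total dominating set if every vertex of $G$ (including those in $S$) is adjacent to some vertex of $S$; $\gamma_t(G)$ is the minimum size of a total dominating set (it exists iff $G$ has no isolated vertices). A set $S$ is a connected dominating set if it is dominating and the subgraph induced by $S$ is connected; $\gamma_c(G)$ is the minimum size of a connected dominating set (it exists iff $G$ is connected). ''Isolated-free'' means having no isolated vertices. *)

From mathcomp Require Import all_boot.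
Set Implicit Arguments. Unset Strict Implicit. Unset Printing Implicit Defensive.

Definition simple_graph (T : finType) (e : rel T) : Prop :=
  symmetric e /\ irreflexive e.

Definition isolated_free (T : finType) (e : rel T) : Prop :=
  forall x : T, exists y : T, e x y.

Definition connected_graph (T : finType) (e : rel T) : Prop :=
  forall x y : T, connect e x y.

Definition dominating (T : finType) (e : rel T) (S : {set T}) : bool :=
  [forall x, (x \notin S) ==> [exists y in S, e x y]].

Definition total_dominating (T : finType) (e : rel T) (S : {set T}) : bool :=
  [forall x, [exists y in S, e x y]].

Definition induced_connected (T : finType) (e : rel T) (S : {set T}) : bool :=
  (S != set0) &&
  [forall x in S, forall y in S,
     connect [rel u v | [&& e u v, u \in S & v \in S]] x y].

Definition connected_dominating (T : finType) (e : rel T) (S : {set T}) : bool :=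
  dominating e S && induced_connected e S.

(* minimum cardinality of a set satisfying P (defaults to #|T| if none,
   which never happens under the hypotheses used) *)
Definition min_card (T : finType) (P : {set T} -> bool) : nat :=
  \big[minn/#|T|]_(S : {set T} | P S) #|S|.

Definition gamma (T : finType) (e : rel T) : nat := min_card (dominating e).
Definition gamma_t (T : finType) (e : rel T) : nat := min_card (total_dominating e).
Definition gamma_c (T : finType) (e : rel T) : nat := min_card (connected_dominating e).

From mathcomp Require Import all_boot zify.
Set Implicit Arguments. Unset Strict Implicit. Unset Printing Implicit Defensive.

(* Adding to a minimum dominating set D one neighbour of each of its vertices
   gives a total dominating set, so gamma_t <= 2 gamma.  A connected dominating
   set with at least two vertices is total dominating, since inside it every
   vertex has a neighbour; as gamma > 1 this gives gamma_t <= gamma_c.  Adding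
   the two bounds yields the inequality, and the path on six vertices, with
   gamma = 2 and gamma_t = gamma_c = 4, attains it. *)

Section MinCard.

Variables (T : finType) (P : {set T} -> bool).

Lemma min_card_le S : P S -> min_card P <= #|S|.
Proof.
move=> PS; rewrite /min_card.
have : S \in index_enum {set T} by rewrite mem_index_enum.
elim: (index_enum _) => [//|A s IHs]; rewrite inE big_cons.
case/predU1P => [<-|Ss]; first by rewrite PS geq_minl.
by case: (P A); rewrite ?geq_min IHs ?orbT.
Qed.

Lemma min_card_ge n :
  n <= #|T| -> (forall S, P S -> n <= #|S|) -> n <= min_card P.
Proof.
move=> n_le_T n_le_P; apply: (big_ind (fun m => n <= m)) => //.
by move=> a b na nb; rewrite leq_min na nb.
Qed.

Lemma min_card_attained S : P S -> exists2 M, P M & #|M| = min_card P.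
Proof.
move=> PS; case: (arg_minnP (fun A : {set T} => #|A|) PS) => M PM M_min.
exists M => //; apply/eqP; rewrite eqn_leq min_card_ge ?min_card_le //.
exact: max_card.
Qed.

End MinCard.

Lemma card_geq_uniq (T : finType) (A : {set T}) (s : seq T) :
  uniq s -> {subset s <= A} -> size s <= #|A|.
Proof. by move=> /card_uniqP <- /subsetP; apply: subset_leq_card. Qed.

Lemma connect_exists_step (T : finType) (r : rel T) x y :
  connect r x y -> x != y -> exists z, r x z.
Proof.
case/connectP=> [[|z p] /= r_p ->]; first by rewrite eqxx.
by case/andP: r_p => r_xz _ _; exists z.
Qed.

Section Domination.

Variables (T : finType) (e : rel T).

Lemma dominating_setT : dominating e setT.
Proof. by apply/forallP => x; rewrite in_setT. Qed.

Lemma gamma_le_card : gamma e <= #|T|.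
Proof. by rewrite -cardsT; apply/min_card_le/dominating_setT. Qed.

Lemma dominatingP (S : {set T}) x :
  dominating e S -> x \notin S -> exists2 y, y \in S & e x y.
Proof. by move=> /forallP /(_ x) /implyP Sx /Sx /exists_inP. Qed.

Lemma dominating_closed_nbr (S : {set T}) x :
  dominating e S -> exists2 y, y \in S & (y == x) || e x y.
Proof.
move=> domS; have [xS | xNS] := boolP (x \in S); first by exists x; rewrite ?eqxx.
by have [y yS e_xy] := dominatingP domS xNS; exists y; rewrite ?e_xy ?orbT.
Qed.

Lemma total_dominatingP (S : {set T}) x :
  total_dominating e S -> exists2 y, y \in S & e x y.
Proof. by move=> /forallP /(_ x) /exists_inP. Qed.

Section Neighbour.

Hypothesis e_iso : isolated_free e.

Definition neighbour (x : T) : T := odflt x [pick y | e x y].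

Lemma neighbourP x : e x (neighbour x).
Proof.
rewrite /neighbour; case: pickP => [//|no_nbr /=].
by have [y e_xy] := e_iso x; have := no_nbr y; rewrite e_xy.
Qed.

Lemma total_dominating_setU_neighbours (D : {set T}) :
  dominating e D -> total_dominating e (D :|: neighbour @: D).
Proof.
move=> domD; apply/forallP => x; apply/exists_inP.
have [xD | xND] := boolP (x \in D).
  by exists (neighbour x); rewrite ?neighbourP // inE imset_f ?orbT.
by have [y yD e_xy] := dominatingP domD xND; exists y; rewrite ?inE ?yD.
Qed.

Lemma gamma_t_le_double_gamma : gamma_t e <= 2 * gamma e.
Proof.
have [D domD gammaD] := min_card_attained dominating_setT.
rewrite /gamma -gammaD.
apply: leq_trans (min_card_le (total_dominating_setU_neighbours domD)) _.
by rewrite mul2n -addnn (leq_trans (leq_card_setU _ _)) ?leq_add2l ?leq_imset_card.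
Qed.

End Neighbour.

Lemma connected_dominating_total (S : {set T}) :
  1 < #|S| -> connected_dominating e S -> total_dominating e S.
Proof.
move=> /card_gt1P [a [b [aS bS ab]]] /andP [domS /andP [_ S_conn]].
apply/forallP => x; apply/exists_inP.
have [xS | xNS] := boolP (x \in S); last exact: dominatingP domS xNS.
have [y yS xy] : exists2 y, y \in S & x != y.
  by case: (eqVneq x a) => [-> | xa]; [exists b | exists a].
move/forall_inP: S_conn => /(_ x xS) /forall_inP /(_ y yS) conn_xy.
by have [z /and3P [e_xz _ zS]] := connect_exists_step conn_xy xy; exists z.
Qed.

Lemma connected_dominating_setT :
  connected_graph e -> 0 < #|T| -> connected_dominating e setT.
Proof.
move=> e_conn /card_gt0P [x0 _].
rewrite /connected_dominating /induced_connected dominating_setT /=.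
apply/andP; split; first by apply/set0Pn; exists x0; rewrite in_setT.
apply/forall_inP => x _; apply/forall_inP => y _.
by rewrite (@eq_connect _ _ e) // => u v /=; rewrite !in_setT !andbT.
Qed.

Lemma gamma_t_le_gamma_c :
  connected_graph e -> 1 < gamma e -> gamma_t e <= gamma_c e.
Proof.
move=> e_conn gamma_gt1.
have T_gt0 : 0 < #|T| := leq_trans (ltnW gamma_gt1) gamma_le_card.
have [C cdC gamma_cC] := min_card_attained (connected_dominating_setT e_conn T_gt0).
rewrite /gamma_c -gamma_cC.
have C_gt1 : 1 < #|C|.
  by apply: leq_trans gamma_gt1 _; apply/min_card_le; case/andP: cdC.
exact/min_card_le/connected_dominating_total.
Qed.

End Domination.

Lemma double_gamma_t_le (T : finType) (e : rel T) :
  connected_graph e -> isolated_free e -> 1 < gamma e ->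
  2 * gamma_t e <= 2 * gamma e + gamma_c e.
Proof.
move=> e_conn e_iso gamma_gt1.
by rewrite mul2n -addnn leq_add ?gamma_t_le_double_gamma ?gamma_t_le_gamma_c.
Qed.

Section PathGraph.

Variable n : nat.

Definition path_graph : rel 'I_n :=
  fun x y => (x.+1 == y :> nat) || (y.+1 == x :> nat).

Lemma path_graph_sym : symmetric path_graph.
Proof. by move=> x y; rewrite /path_graph orbC. Qed.

Lemma path_graph_simple : simple_graph path_graph.
Proof. by split; [apply: path_graph_sym | move=> x; rewrite /path_graph; lia]. Qed.

Lemma path_graph_isolated_free : 1 < n -> isolated_free path_graph.
Proof.
move=> n_gt1 x; have x_lt := ltn_ord x.
case: (ltnP x.+1 n) => [xS_lt | n_le].
  by exists (Ordinal xS_lt); rewrite /path_graph eqxx.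
have xP_lt : x.-1 < n by lia.
by exists (Ordinal xP_lt); rewrite /path_graph /=; lia.
Qed.

Lemma connect_consecutive_up (r : rel 'I_n) lo hi (x : 'I_n) k :
  (forall u v : 'I_n, lo <= u -> v <= hi -> u.+1 = v :> nat -> r u v) ->
  lo <= x -> forall y : 'I_n, y = x + k :> nat -> y <= hi -> connect r x y.
Proof.
move=> r_step lo_x; elim: k => [|k IHk] y y_eq y_hi.
  by rewrite addn0 in y_eq; rewrite (val_inj y_eq) connect0.
have z_lt : x + k < n by have := ltn_ord y; lia.
apply: connect_trans (IHk (Ordinal z_lt) erefl _) (connect1 (r_step _ _ _ _ _)).
all: rewrite /=; lia.
Qed.

Lemma connect_consecutive (r : rel 'I_n) lo hi :
  symmetric r ->
  (forall u v : 'I_n, lo <= u -> v <= hi -> u.+1 = v :> nat -> r u v) ->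
  forall x y : 'I_n, lo <= x <= hi -> lo <= y <= hi -> connect r x y.
Proof.
move=> r_sym r_step.
have conn_up (x y : 'I_n) : lo <= x -> x <= y <= hi -> connect r x y.
  move=> lo_x /andP [xy y_hi].
  exact: connect_consecutive_up r_step lo_x y (esym (subnKC xy)) y_hi.
move=> x y /andP [lo_x x_hi] /andP [lo_y y_hi].
have [xy | /ltnW yx] := leqP x y; first by apply: conn_up; rewrite ?xy.
by rewrite sym_connect_sym //; apply: conn_up; rewrite ?yx.
Qed.

Lemma path_graph_connected : connected_graph path_graph.
Proof.
move=> x y; apply: (connect_consecutive (lo := 0) (hi := n.-1) path_graph_sym).
- by move=> u v _ _ uv; rewrite /path_graph uv eqxx.
- by have := ltn_ord x; lia.
- by have := ltn_ord y; lia.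
Qed.

End PathGraph.

Notation P6 := (@path_graph 6).

Lemma gamma_P6_gt1 : 1 < gamma P6.
Proof.
apply: min_card_ge => [|S domS]; first by rewrite card_ord.
have [p pS p_near0] := dominating_closed_nbr (inord 0) domS.
have [q qS q_near5] := dominating_closed_nbr (inord 5) domS.
apply: (@card_geq_uniq _ _ [:: p; q]) => [|z]; last by rewrite !inE => /orP [] /eqP ->.
move: p_near0 q_near5; rewrite /= inE andbT /path_graph -!val_eqE /= !inordK //.
lia.
Qed.

Lemma gamma_P6_le : gamma P6 <= 2.
Proof.
apply: (@leq_trans #|[set inord 1; inord 4] : {set 'I_6}|);
  last by rewrite cards2 ltnS leq_b1.
apply/min_card_le/forallP => x; apply/implyP.
rewrite !inE -!val_eqE /= !inordK // => x_notin; apply/exists_inP.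
have := ltn_ord x; case: (leqP x 2) => x_side x_lt.
  by exists (inord 1); rewrite ?inE ?eqxx // /path_graph inordK //; lia.
by exists (inord 4); rewrite ?inE ?eqxx ?orbT // /path_graph inordK //; lia.
Qed.

Lemma gamma_t_P6_ge : 4 <= gamma_t P6.
Proof.
apply: min_card_ge => [|S tdS]; first by rewrite card_ord.
have [a aS a_nbr] := total_dominatingP (inord 0) tdS.
have [b bS b_nbr] := total_dominatingP (inord 5) tdS.
have [c cS c_nbr] := total_dominatingP (inord 1) tdS.
have [d dS d_nbr] := total_dominatingP (inord 4) tdS.
apply: (@card_geq_uniq _ _ [:: a; b; c; d]) => [|z].
  move: a_nbr b_nbr c_nbr d_nbr (ltn_ord b).
  by rewrite /= !inE /path_graph -!val_eqE /= !inordK //; lia.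
by rewrite !inE => /or4P [] /eqP ->.
Qed.

Definition inner_P6 : {set 'I_6} := ~: [set ord0; ord_max].

Lemma inner_P6E x : (x \in inner_P6) = (0 < x < 5).
Proof. by rewrite !inE -!val_eqE /=; have := ltn_ord x; lia. Qed.

Lemma gamma_c_P6_le : gamma_c P6 <= 4.
Proof.
have card_inner : #|inner_P6| = 4.
  have := cardsC [set ord0; ord_max : 'I_6].
  rewrite /inner_P6 cards2 card_ord -val_eqE /= => card_sum.
  by apply/eqP; rewrite -(eqn_add2l 2) card_sum.
apply: (@leq_trans #|inner_P6|); last by rewrite card_inner.
apply/min_card_le/and3P; split.
- apply/forallP => x; apply/implyP; rewrite inner_P6E => x_end; apply/exists_inP.
  have := ltn_ord x; case: (leqP x 0) => x_side x_lt.
    by exists (inord 1); rewrite ?inner_P6E /path_graph inordK //; lia.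
  by exists (inord 4); rewrite ?inner_P6E /path_graph inordK //; lia.
- by apply/set0Pn; exists (inord 1); rewrite inner_P6E inordK.
- apply/forall_inP => x x_in; apply/forall_inP => y y_in.
  apply: (connect_consecutive (lo := 1) (hi := 4)).
  + by move=> u v /=; rewrite path_graph_sym (andbC (u \in _)).
  + by move=> u v lo_u v_hi uv /=; rewrite !inner_P6E /path_graph uv eqxx; lia.
  + by rewrite -inner_P6E.
  + by rewrite -inner_P6E.
Qed.

Theorem theorem2p1 :
  (forall (T : finType) (e : rel T),
      simple_graph e -> connected_graph e -> isolated_free e -> 1 < gamma e ->
      2 * gamma_t e <= 2 * gamma e + gamma_c e)
  /\
  (exists (T : finType) (e : rel T),
      [/\ simple_graph e, connected_graph e, isolated_free e, 1 < gamma e &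
          2 * gamma_t e = 2 * gamma e + gamma_c e]).
Proof.
split; first by move=> T e _; apply: double_gamma_t_le.
have P6_conn : connected_graph P6 := path_graph_connected (n := 6).
have P6_iso : isolated_free P6 by apply: path_graph_isolated_free.
exists _, P6; split=> //; [exact: path_graph_simple | exact: gamma_P6_gt1 |].
have := double_gamma_t_le P6_conn P6_iso gamma_P6_gt1.
have := gamma_P6_le; have := gamma_t_P6_ge; have := gamma_c_P6_le.
lia.
Qed.
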